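(* With $n,t,T$, $c(\theta)$ and $s_e(\theta)$ as in the context, we have $|c(\theta)|\le\sqrt{n}$ and $|s_e(\theta)|\le 6\sqrt{n}$ for every $\theta\in\mathbb{R}$.
   Context: Rudin–Shapiro polynomials: $P_0(z)=Q_0(z)=1$ and for $s\ge0$, $P_{s+1}(z)=P_s(z)+z^{2^s}Q_s(z)$, $Q_{s+1}(z)=P_s(z)-z^{2^s}Q_s(z)$. Since the first $2^s$ coefficients of $P_{s+1}$ coincide with those of $P_s$, for each $m\ge1$ let $P_{<m}(z)$ denote the polynomial of degree $m-1$ whose coefficients agree with the first $m$ coefficients of $P_s$ for all sufficiently large $s$. Standing setup: $n$ is a sufficiently large positive integer, $t$ is an odd integer such that $\gamma:=(2^{t+11}+2^t-1)/n$ satisfies $2^{-43}<\gamma\le2^{-40}$, and $T:=2^{t+10}$. With $z=e^{2i\theta}$, define $c(\theta):=\mathrm{Re}\big(z^TP_t(z)+z^{2T}Q_t(z)\big)$ and $s_e(\theta):=\mathrm{Im}\big(P_{<(n+1)}(z)-z^TP_t(z)-z^{2T}P_t(z)\big)$. *)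

From mathcomp Require Import all_boot all_order all_algebra.
From mathcomp Require Import complex.
From mathcomp Require Import reals trigo.
Set Implicit Arguments. Unset Strict Implicit. Unset Printing Implicit Defensive.
Import Order.TTheory GRing.Theory Num.Theory.
Local Open Scope ring_scope.

Fixpoint RS (K : comNzRingType) (s : nat) : {poly K} * {poly K} :=
  match s with
  | 0 => (1, 1)
  | s'.+1 => let: (P, Q) := RS K s' in
             (P + 'X^(2 ^ s') * Q, P - 'X^(2 ^ s') * Q)
  end.

Definition RSP (K : comNzRingType) (s : nat) : {poly K} := (RS K s).1.
Definition RSQ (K : comNzRingType) (s : nat) : {poly K} := (RS K s).2.

(* P_{<m}: the polynomial of degree m-1 whose coefficients are the first m
   coefficients of P_s for s large; s = m suffices since 2^m >= m. *)
Definition RSPlt (K : comNzRingType) (m : nat) : {poly K} :=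
  \poly_(k < m) (RSP K m)`_k.

Definition zexp (R : realType) (theta : R) : R[i] :=
  Complex (cos (2 * theta)) (sin (2 * theta)).

Definition cfun (R : realType) (t : nat) (theta : R) : R :=
  let z := zexp theta in
  let T := (2 ^ (t + 10))%N in
  complex.Re (z ^+ T * (RSP R[i] t).[z] + z ^+ (2 * T) * (RSQ R[i] t).[z]).

Definition sefun (R : realType) (n t : nat) (theta : R) : R :=
  let z := zexp theta in
  let T := (2 ^ (t + 10))%N in
  complex.Im ((RSPlt R[i] n.+1).[z] - z ^+ T * (RSP R[i] t).[z]
      - z ^+ (2 * T) * (RSP R[i] t).[z]).

From mathcomp Require Import all_boot all_order all_algebra.
From mathcomp Require Import complex.
From mathcomp Require Import reals trigo.
From mathcomp Require Import ring lra zify.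
Set Implicit Arguments. Unset Strict Implicit. Unset Printing Implicit Defensive.
Import Order.TTheory GRing.Theory Num.Theory Normc.
Local Open Scope ring_scope.

(* On the unit circle the parallelogram law turns the recursion for the
   Rudin-Shapiro pair into |P_s|^2 + |Q_s|^2 = 2^(s+1).  A truncation of
   P_(s+1) or Q_(s+1) to m > 2^s terms is P_s plus z^(2^s) times a truncation
   of +-Q_s to at most 2^s terms, so induction on s bounds every partial sum
   of length m by 4 sqrt m.  Then |c| <= |P_t| + |Q_t| <= sqrt (2^(t+2)), and
   |s_e| <= 4 sqrt (n+1) + 2 |P_t| with |P_t| <= sqrt (2^(t+1)); both are
   small against sqrt n because gamma <= 2^-40 forces n >= 2^(t+11). *)

Section ComplexModulus.
Variable R : rcfType.
Implicit Types x y : R[i].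

Lemma normc_ge0 x : 0 <= normc x.
Proof. by case: x => a b; apply: sqrtr_ge0. Qed.

Lemma sqr_normcE x : normc x ^+ 2 = complex.Re x ^+ 2 + complex.Im x ^+ 2.
Proof. by case: x => a b; rewrite /= sqr_sqrtr // addr_ge0 // sqr_ge0. Qed.

Lemma normcX x k : normc (x ^+ k) = normc x ^+ k.
Proof. by elim: k => [|k IH]; rewrite ?normc1 // !exprS normcM IH. Qed.

Lemma ler_abs_Re_normc x : `|complex.Re x| <= normc x.
Proof.
by rewrite -ler_sqr ?nnegrE ?normc_ge0 // sqr_normcE real_normK ?num_real // lerDl sqr_ge0.
Qed.

Lemma ler_abs_Im_normc x : `|complex.Im x| <= normc x.
Proof.
by rewrite -ler_sqr ?nnegrE ?normc_ge0 // sqr_normcE real_normK ?num_real // lerDr sqr_ge0.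
Qed.

Lemma normc_parallelogram x y :
  normc (x + y) ^+ 2 + normc (x - y) ^+ 2 = 2 * normc x ^+ 2 + 2 * normc y ^+ 2.
Proof. by case: x => a b; case: y => c d; rewrite !sqr_normcE /=; ring. Qed.

End ComplexModulus.

Lemma sqrtr_ge_of_sqr (R : rcfType) (a b : R) : 0 <= a -> a ^+ 2 <= b -> a <= Num.sqrt b.
Proof. by move=> a_ge0 ab; rewrite -[a]ger0_norm // -sqrtr_sqr ler_wsqrtr. Qed.

Lemma sqr_add_le_split (R : realFieldType) (X Y a r : R) :
  0 <= X -> 0 <= Y -> X ^+ 2 <= 2 * a -> Y ^+ 2 <= 16 * r -> r <= a ->
  (X + Y) ^+ 2 <= 16 * (a + r).
Proof.
move=> X_ge0 Y_ge0 hX hY ra.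
have := sqr_ge0 (2 * X - Y / 2); nra.
Qed.

Section RudinShapiro.
Variable K : comNzRingType.

Lemma RSP_S s : RSP K s.+1 = RSP K s + 'X^(2 ^ s) * RSQ K s.
Proof. by rewrite /RSP /RSQ /=; case: (RS K s). Qed.

Lemma RSQ_S s : RSQ K s.+1 = RSP K s - 'X^(2 ^ s) * RSQ K s.
Proof. by rewrite /RSP /RSQ /=; case: (RS K s). Qed.

Lemma size_RS_le s : (size (RSP K s) <= 2 ^ s)%N /\ (size (RSQ K s) <= 2 ^ s)%N.
Proof.
elim: s => [|s [sP sQ]]; first by rewrite /RSP /RSQ /= size_poly1.
have sXQ : (size ('X^(2 ^ s) * RSQ K s)%R <= 2 ^ s.+1)%N.
  by rewrite (leq_trans (size_polyMleq _ _)) // size_polyXn expnS; lia.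
have sP' : (size (RSP K s) <= 2 ^ s.+1)%N by rewrite expnS; lia.
by rewrite RSP_S RSQ_S !(leq_trans (size_polyD _ _)) // ?size_polyN geq_max sP' sXQ.
Qed.

End RudinShapiro.

Section UnitCircle.
Variables (R : rcfType) (z : R[i]).
Hypothesis normc_z : normc z = 1.
Local Notation C := R[i].

Lemma normc_unitXM k x : normc (z ^+ k * x) = normc x.
Proof. by rewrite normcM normcX normc_z expr1n mul1r. Qed.

Lemma RS_energy s :
  normc (RSP C s).[z] ^+ 2 + normc (RSQ C s).[z] ^+ 2 = (2 ^ s.+1)%:R.
Proof.
elim: s => [|s IH]; first by rewrite /RSP /RSQ /= hornerC normc1 expr1n.
rewrite RSP_S RSQ_S !(hornerD, hornerN, hornerM, hornerXn) normc_parallelogram.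
by rewrite normc_unitXM -mulrDr IH [in RHS]expnS natrM.
Qed.

Lemma sqr_normc_RSP_le s : normc (RSP C s).[z] ^+ 2 <= 2 * (2 ^ s)%:R.
Proof. by rewrite -natrM -expnS -RS_energy lerDl sqr_ge0. Qed.

Definition partial_sums_bounded (p : {poly C}) : Prop :=
  forall m, normc (take_poly m p).[z] ^+ 2 <= 16 * m%:R.

Lemma partial_sums_boundedN p :
  partial_sums_bounded p -> partial_sums_bounded (- p).
Proof. by move=> hp m; rewrite raddfN hornerN normcN; exact: hp. Qed.

Lemma partial_sums_bounded_shift a (U V : {poly C}) :
  (size U <= a)%N -> (size V <= a)%N -> normc U.[z] ^+ 2 <= 2 * a%:R ->
  partial_sums_bounded U -> partial_sums_bounded V ->
  partial_sums_bounded (U + 'X^a * V).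
Proof.
move=> sU sV hU bU bV m.
rewrite take_polyD mulrC take_polyMXn hornerD hornerM hornerXn.
have [m_le_a | a_lt_m] := leqP m a.
  by rewrite (_ : m - a = 0)%N ?take_poly0l ?horner0 ?mul0r ?addr0 //; lia.
rewrite (take_poly_id (leq_trans sU (ltnW a_lt_m))) mulrC.
pose r := minn (m - a) a.
have -> : take_poly (m - a) V = take_poly r V.
  by rewrite /r; case: leqP => // ?; rewrite !take_poly_id //; lia.
have hD := le_normcD U.[z] (z ^+ a * (take_poly r V).[z]).
rewrite normc_unitXM in hD.
have r_le_a : r%:R <= a%:R :> R by rewrite ler_nat /r; lia.
have ar_le_m : (a + r)%:R <= m%:R :> R by rewrite ler_nat /r; lia.
have := sqr_add_le_split (normc_ge0 _) (normc_ge0 _) hU (bV r) r_le_a.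
have := normc_ge0 (U.[z] + z ^+ a * (take_poly r V).[z]).
rewrite natrD in ar_le_m; nra.
Qed.

Lemma partial_sums_bounded_RS s :
  partial_sums_bounded (RSP C s) /\ partial_sums_bounded (RSQ C s).
Proof.
elim: s => [|s [bP bQ]].
  suff b1 : partial_sums_bounded 1 by [].
  case=> [|m]; first by rewrite take_poly0l horner0 normc0 expr0n mulr0.
  rewrite take_poly_id ?size_poly1 // hornerC normc1 expr1n.
  have : 1 <= m.+1%:R :> R by rewrite ler1n.
  lra.
have [sP sQ] := size_RS_le C s.
rewrite RSP_S RSQ_S -mulrN; split; apply: partial_sums_bounded_shift;
  rewrite ?size_polyN ?sqr_normc_RSP_le //; exact: partial_sums_boundedN.
Qed.

End UnitCircle.

Section Zexp.
Variable R : realType.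

Lemma normc_zexp (theta : R) : normc (zexp theta) = 1.
Proof. by rewrite /zexp /= cos2Dsin2 sqrtr1. Qed.

Lemma abs_cfun_le n t (theta : R) :
  (2 ^ (t + 2) <= n)%N -> `|cfun t theta| <= Num.sqrt n%:R.
Proof.
move=> n_big; have z_unit := normc_zexp theta.
rewrite /cfun; set z := zexp theta; set T := (2 ^ (t + 10))%N.
set P := (RSP R[i] t).[z]; set Q := (RSQ R[i] t).[z].
apply: le_trans (ler_abs_Re_normc _) _; apply: sqrtr_ge_of_sqr; first exact: normc_ge0.
have hD := le_normcD (z ^+ T * P) (z ^+ (2 * T) * Q).
rewrite !normc_unitXM // in hD.
have hE := RS_energy z_unit t.
have hn : 2 * (2 ^ t.+1)%:R <= n%:R :> R by rewrite -natrM -expnS ler_nat -(addn2 t).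
have := normc_ge0 (z ^+ T * P + z ^+ (2 * T) * Q).
have := sqr_ge0 (normc P - normc Q).
nra.
Qed.

Lemma abs_sefun_le n t (theta : R) :
  (2 ^ (t + 7) <= n)%N -> `|sefun n t theta| <= 6 * Num.sqrt n%:R.
Proof.
move=> n_big; have z_unit := normc_zexp theta.
rewrite /sefun; set z := zexp theta; set T := (2 ^ (t + 10))%N.
rewrite (_ : (RSPlt _ _).[z] = (take_poly n.+1 (RSP R[i] n.+1)).[z]) //.
set S := (take_poly _ _).[z]; set A := (RSP R[i] t).[z].
apply: le_trans (ler_abs_Im_normc _) _.
have hD : normc (S - z ^+ T * A - z ^+ (2 * T) * A) <= normc S + 2 * normc A.
  rewrite mulr2n mulrDl mul1r addrA.
  apply: le_trans (le_normcD _ _) _; rewrite normcN normc_unitXM // lerD2r.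
  by apply: le_trans (le_normcD _ _) _; rewrite normcN normc_unitXM.
apply: le_trans hD _.
have hS := (partial_sums_bounded_RS z_unit n.+1).1 n.+1; rewrite -/S in hS.
have hA := sqr_normc_RSP_le z_unit t; rewrite -/A in hA.
have n_big' : 128 * (2 ^ t)%:R <= n%:R :> R.
  by rewrite -natrM ler_nat mulnC -[128%N]/(2 ^ 7)%N -expnD.
rewrite -[n.+1]addn1 natrD in hS.
set q := Num.sqrt n%:R.
have q_ge0 : 0 <= q := sqrtr_ge0 _.
have q_sqr : q ^+ 2 = n%:R by rewrite sqr_sqrtr ?ler0n.
have S_le : 2 * normc S <= 9 * q.
  rewrite -ler_sqr ?nnegrE ?mulr_ge0 ?normc_ge0 // !exprMn q_sqr.
  have : 1 <= (2 ^ t)%:R :> R by rewrite ler1n expn_gt0.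
  lra.
have A_le : 8 * normc A <= q.
  rewrite -ler_sqr ?nnegrE ?mulr_ge0 ?normc_ge0 // exprMn q_sqr; nra.
lra.
Qed.

End Zexp.

(* [k / 0 = 0], so it is the positivity of the ratio that rules out [n = 0]. *)
Lemma leq_of_natr_div_le1 (R : numFieldType) (k n : nat) :
  0 < k%:R / n%:R :> R -> k%:R / n%:R <= 1 :> R -> (k <= n)%N.
Proof.
case: n => [|n]; first by rewrite invr0 mulr0 ltxx.
by move=> _; rewrite ler_pdivrMr ?ltr0n // mul1r ler_nat.
Qed.

Theorem lemma3p3 (R : realType) :
  exists N : nat, forall n t : nat, (N <= n)%N -> odd t ->
    let gamma : R := ((2 ^ (t + 11) + 2 ^ t - 1)%N)%:R / n%:R in
    (2%:R ^- 43 < gamma) -> (gamma <= 2%:R ^- 40) ->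
    forall theta : R,
      `|cfun t theta| <= Num.sqrt n%:R /\
      `|sefun n t theta| <= 6 * Num.sqrt n%:R.
Proof.
exists 0%N => n t _ _ gamma gamma_gt gamma_le theta.
have k_le_n : (2 ^ (t + 11) + 2 ^ t - 1 <= n)%N.
  apply: (leq_of_natr_div_le1 (lt_trans _ gamma_gt) (le_trans gamma_le _)).
    by rewrite invr_gt0 exprn_gt0.
  by rewrite invf_le1 ?exprn_gt0 // exprn_ege1 // ler1n.
have n_big : (2 ^ (t + 7) <= n)%N.
  have : (2 ^ (t + 7) <= 2 ^ (t + 11))%N by rewrite leq_pexp2l // leq_add2l.
  by have := expn_gt0 2 t; lia.
split; last exact: abs_sefun_le.
by apply: abs_cfun_le; apply: leq_trans n_big; rewrite leq_pexp2l // leq_add2l.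
Qed.
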